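(* Strong Nash equilibria need not exist in the Sharing with Friendship game. Specifically, consider the instance with: - $n=4$ players; - friendship graph $G$ with edge set $\{\{1,2\},\{3,4\}\}$; - $m=2$ machines with values $p_1=2+\epsilon$ and $p_2=4+3\epsilon$. For a suitable $\epsilon>0$ (e.g. any sufficiently small $\epsilon>0$), this instance has no strong Nash equilibrium.
   Context: An instance of the Sharing with Friendship game consists of: - players $N=\{1,\dots,n\}$; - machines $M=\{1,\dots,m\}$ with values $p_1,\dots,p_m\ge0$; - a simple undirected graph $G=(N,E)$. A state is $\vec s\in M^n$, with $X_k(\vec s)=\{i:s_i=k\}$ and $x_k(\vec s)=|X_k(\vec s)|$. The utility of player $i$ with $s_i=k$ is $$u_i(\vec s)=\frac{p_k}{x_k(\vec s)}+\#\{j\in X_k(\vec s):\{i,j\}\in E\}.$$ A state $\vec s$ is a strong Nash equilibrium if for every nonempty coalition $C\subseteq N$ and every joint deviation $\vec s_C'\in M^C$, some $i\in C$ has $u_i(\vec s)\ge u_i(\vec s_C',\vec s_{-C})$. *)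

From HB Require Import structures.
From mathcomp Require Import all_boot all_order all_algebra.
Set Implicit Arguments. Unset Strict Implicit. Unset Printing Implicit Defensive.
Import Order.TTheory GRing.Theory Num.Theory.
Local Open Scope ring_scope.

(* Sharing with Friendship game: players 'I_n, machines 'I_m (0-indexed),
   machine values p : 'I_m -> R, friendship graph given by a relation e
   on players (for a simple graph: symmetric and irreflexive). *)

Definition state (n m : nat) := {ffun 'I_n -> 'I_m}.

Definition load (n m : nat) (s : state n m) (k : 'I_m) : nat :=
  #|[set i | s i == k]|.

Definition utility (R : realFieldType) (n m : nat) (p : 'I_m -> R)
    (e : rel 'I_n) (s : state n m) (i : 'I_n) : R :=
  p (s i) / (load s (s i))%:R + (#|[set j | (s j == s i) && e i j]|)%:R.

Definition deviate (n m : nat) (s : state n m) (C : {set 'I_n})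
    (s' : state n m) : state n m :=
  [ffun i => if i \in C then s' i else s i].

Definition strong_NE (R : realFieldType) (n m : nat) (p : 'I_m -> R)
    (e : rel 'I_n) (s : state n m) : Prop :=
  forall (C : {set 'I_n}), C != set0 -> forall s' : state n m,
    exists2 i, i \in C & utility p e (deviate s C s') i <= utility p e s i.

(* The instance: players 1..4 are 0..3; edges {1,2},{3,4} become {0,1},{2,3}. *)
Definition friend4 : rel 'I_4 :=
  fun i j => ((val i == 0%N) && (val j == 1%N)) || ((val i == 1%N) && (val j == 0%N))
          || ((val i == 2%N) && (val j == 3%N)) || ((val i == 3%N) && (val j == 2%N)).

Definition vals2 (R : realFieldType) (eps : R) : 'I_2 -> R :=
  fun k => if val k == 0%N then 2 + eps else 4 + 3 * eps.

From HB Require Import structures.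
From mathcomp Require Import all_boot all_order all_algebra.
From mathcomp Require Import lra.
Set Implicit Arguments. Unset Strict Implicit. Unset Printing Implicit Defensive.
Import Order.TTheory GRing.Theory Num.Theory.
Local Open Scope ring_scope.

(* In the four-player instance every player has exactly one friend, so a
   player's utility is  p(machine)/load + [partner on the same machine].
   Writing A for the cheap machine (value 2+eps) and B for the valuable one
   (value 4+3eps), a blocking move is found from the number of players on B:
   - at most two players on B, the players on A not forming a friend pair:
     one player of A moves alone to B;
   - two players on B forming a friend pair: the other pair moves to B;
   - three players on B: the one whose friend is on A joins it on A;
   - all four on B: any player moves alone to A.
   These moves are tabulated in [blocking_move] over the 16 states; checking
   that every mover strictly gains is linear arithmetic in eps, valid for
   0 < eps < 1, which gives the theorem. *)

Section CoalitionalDeviation.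
Variables (R : realFieldType) (n m : nat) (p : 'I_m -> R) (e : rel 'I_n).

Lemma joint_move_refutes_strong_NE (s : state n m) (C : {set 'I_n}) (k : 'I_m) :
  C != set0 ->
  (forall i, i \in C -> utility p e s i < utility p e (deviate s C [ffun=> k]) i) ->
  ~ strong_NE p e s.
Proof.
move=> C_nonempty gain /(_ C C_nonempty [ffun=> k]) [i iC].
by apply/negP; rewrite -ltNge; apply: gain.
Qed.

End CoalitionalDeviation.

Local Notation pl0 := (@Ordinal 4 0 isT).
Local Notation pl1 := (@Ordinal 4 1 isT).
Local Notation pl2 := (@Ordinal 4 2 isT).
Local Notation pl3 := (@Ordinal 4 3 isT).

Lemma card_I4 (P : pred 'I_4) :
  #|[set j | P j]| = (P pl0 + P pl1 + P pl2 + P pl3)%N.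
Proof.
rewrite cardsE -sum1_card big_mkcond /= !big_ord_recl big_ord0 addn0 !addnA.
by congr (_ + _ + _ + _); congr (nat_of_bool (P _)); apply: val_inj.
Qed.

Definition partner (i : 'I_4) : 'I_4 :=
  match val i with 0 => pl1 | 1 => pl0 | 2 => pl3 | _ => pl2 end.

Lemma friend4E (i j : 'I_4) : friend4 i j = (j == partner i).
Proof.
by case: i j => [[|[|[|[|//]]]] ?] [[|[|[|[|//]]]] ?].
Qed.

Lemma utility4E (R : realFieldType) (p : 'I_2 -> R) (s : state 4 2) (i : 'I_4) :
  utility p friend4 s i =
  p (s i) / (load s (s i))%:R + (s (partner i) == s i)%:R.
Proof.
congr (_ + _%:R); have [same | diff] := eqVneq (s (partner i)) (s i); rewrite /=.
- transitivity #|[set partner i]|; last by rewrite cards1.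
  apply: eq_card => j; rewrite !inE friend4E.
  by case: (eqVneq j (partner i)) => [->|]; rewrite ?andbF ?same ?eqxx.
- transitivity #|@set0 'I_4|; last by rewrite cards0.
  apply: eq_card => j; rewrite !inE friend4E.
  by case: (eqVneq j (partner i)) => [->|]; rewrite ?andbF ?(negbTE diff).
Qed.

Local Notation mA := (@ord0 1).
Local Notation mB := (@ord_max 1).

Definition profile (b0 b1 b2 b3 : bool) : state 4 2 :=
  [ffun i : 'I_4 => if nth false [:: b0; b1; b2; b3] i then mB else mA].

Lemma two_machines (k : 'I_2) : k = if k == mB then mB else mA.
Proof. by case: k => -[|[|//]] ?; apply: val_inj. Qed.

Lemma profile_onB (s : state 4 2) :
  s = profile (s pl0 == mB) (s pl1 == mB) (s pl2 == mB) (s pl3 == mB).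
Proof.
apply/ffunP => -[[|[|[|[|//]]]] lti]; rewrite ffunE /= -two_machines;
  by congr (s _); apply: val_inj.
Qed.

Definition blocking_move (b0 b1 b2 b3 : bool) : {set 'I_4} * 'I_2 :=
  match b0, b1, b2, b3 with
  | false, false, true, true => ([set pl0; pl1], mB)
  | true, true, false, false => ([set pl2; pl3], mB)
  (* three players on B: the one whose friend is on A moves to A *)
  | false, true, true, true => ([set pl1], mA)
  | true, false, true, true => ([set pl0], mA)
  | true, true, false, true => ([set pl3], mA)
  | true, true, true, false => ([set pl2], mA)
  | true, true, true, true => ([set pl0], mA)
  (* at most two players on B, not a friend pair: the first player on A
     moves alone to B *)
  | false, _, _, _ => ([set pl0], mB)
  | true, _, _, _ => ([set pl1], mB)
  end.

Lemma blocking_move_gains (R : realFieldType) (eps : R) (b0 b1 b2 b3 : bool) :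
  0 < eps -> eps < 1 ->
  let s := profile b0 b1 b2 b3 in
  let: (C, k) := blocking_move b0 b1 b2 b3 in
  C != set0 /\
  forall i, i \in C -> utility (vals2 eps) friend4 s i <
                       utility (vals2 eps) friend4 (deviate s C [ffun=> k]) i.
Proof.
move=> eps_gt0 eps_lt1.
case: b0; case: b1; case: b2; case: b3 => /=; split;
  try by apply/set0Pn; eexists; first [exact: set11 | exact: setU11].
all: move=> [[|[|[|[|//]]]] lti]; rewrite !inE //= => _.
all: rewrite !utility4E /load !card_I4 /deviate /vals2 !ffunE !inE /= !addnE /=; lra.
Qed.

Theorem theorem20 (R : realFieldType) :
  exists2 delta : R, 0 < delta &
    forall eps : R, 0 < eps -> eps < delta ->
      forall s : state 4 2, ~ strong_NE (vals2 eps) friend4 s.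
Proof.
exists 1 => // eps eps_gt0 eps_lt1 s.
rewrite [s]profile_onB; move: (s pl0 == mB) (s pl1 == mB) (s pl2 == mB) (s pl3 == mB).
move=> b0 b1 b2 b3; have /= := blocking_move_gains b0 b1 b2 b3 eps_gt0 eps_lt1.
case: blocking_move => C k [C_nonempty gain].
exact: joint_move_refutes_strong_NE C_nonempty gain.
Qed.
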